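(* Let $n\ge 2$. Then (i) $\mathbf{E}(\mathbb{S}^n_\infty)\succeq\mathcal{F}(\mathbb{S}^n_\infty)\supsetneq\mathbb{D}^{n+1}_\infty$; (ii) $\mathbf{E}(\mathbb{D}^{n+1}_\infty)\succeq\mathcal{F}(\mathbb{D}^{n+1}_\infty)\supseteq\mathcal{F}(\mathbb{S}^n_\infty)\supsetneq\mathbb{D}^{n+1}_\infty$. As a consequence, $\mathbb{D}^{n+1}_\infty$ is not injective.
   Context: $\mathbb{R}^m_\infty$ denotes $\mathbb{R}^m$ with the metric $d_\infty$ induced by the $\ell^\infty$-norm. $\mathbb{S}^n_\infty=\{x\in\mathbb{R}^{n+1}:\|x\|_2=1\}$ and $\mathbb{D}^{n+1}_\infty=\{x\in\mathbb{R}^{n+1}:\|x\|_2\le1\}$, both with the metric $d_\infty$. For $1\le i\le m$, $\Lambda_i=\{x\in\mathbb{R}^m:x_i=\|x\|_\infty\}$, and for $p\in\mathbb{R}^m$, $\xi\in\{\pm1\}$, $p+\xi\Lambda_i=\{p+\xi z:z\in\Lambda_i\}$. For compact $X\subseteq\mathbb{R}^m_\infty$, a point $p\in\mathbb{R}^m$ is $X$-surrounding if $(p+\xi\Lambda_i)\cap X\ne\emptyset$ for all $i\in\{1,\dots,m\}$ and $\xi\in\{\pm1\}$; $\mathcal{F}(X)$ is the set of $X$-surrounding points with metric $d_\infty$. For a metric space $X$, $\Delta(X)=\{f:X\to\mathbb{R}\text{ bounded}: f(x)+f(x')\ge d_X(x,x')\}$ and the tight span $\mathbf{E}(X)$ is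 the set of pointwise-minimal elements of $\Delta(X)$ with the sup-norm metric. $A\succeq B$ means $B$ isometrically embeds into $A$. A metric space $E$ is injective if for every isometric embedding $X\hookrightarrow\tilde X$ and every 1-Lipschitz $f:X\to E$ there is a 1-Lipschitz $\tilde f:\tilde X\to E$ extending $f$. *)

From mathcomp Require Import all_boot.
From Stdlib Require Import Reals.

Set Implicit Arguments.
Unset Strict Implicit.

Local Open Scope R_scope.

Definition vec (m : nat) := 'I_m -> R.

Definition norm_inf (m : nat) (x : vec m) : R :=
  \big[Rmax/0]_(i < m) Rabs (x i).
Definition d_inf (m : nat) (x y : vec m) : R :=
  \big[Rmax/0]_(i < m) Rabs (x i - y i).

Definition sqnorm2 (m : nat) (x : vec m) : R :=
  \big[Rplus/0]_(i < m) (x i * x i).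
Definition sphere (m : nat) (x : vec m) : Prop := sqnorm2 x = 1.
Definition cball (m : nat) (x : vec m) : Prop := sqnorm2 x <= 1.

Record MetricSpace := MkMetric { carrier :> Type; dist : carrier -> carrier -> R }.

Definition is_metric (X : MetricSpace) : Prop :=
  (forall x y : X, 0 <= dist x y) /\
  (forall x y : X, dist x y = 0 <-> x = y) /\
  (forall x y : X, dist x y = dist y x) /\
  (forall x y z : X, dist x z <= dist x y + dist y z).

Definition subspace (m : nat) (P : vec m -> Prop) : MetricSpace :=
  @MkMetric {x : vec m | P x} (fun a b => d_inf (proj1_sig a) (proj1_sig b)).

Definition S_inf (n : nat) : MetricSpace := subspace (@sphere n.+1).
Definition D_inf (n : nat) : MetricSpace := subspace (@cball n.+1).

Definition Lambda (m : nat) (i : 'I_m) (z : vec m) : Prop := z i = norm_inf z.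
Definition sgnb (b : bool) : R := if b then 1 else -1.

Definition surrounding (m : nat) (X : vec m -> Prop) (p : vec m) : Prop :=
  forall (i : 'I_m) (xi : bool),
    exists z : vec m, Lambda i z /\ X (fun j => p j + sgnb xi * z j).

Definition F_space (m : nat) (X : vec m -> Prop) : MetricSpace :=
  subspace (surrounding X).

Definition subset_of (m : nat) (A B : vec m -> Prop) : Prop :=
  forall x, A x -> B x.
Definition strict_subset_of (m : nat) (A B : vec m -> Prop) : Prop :=
  subset_of A B /\ exists x, B x /\ ~ A x.

Definition in_Delta (X : MetricSpace) (f : X -> R) : Prop :=
  (exists M, forall x, Rabs (f x) <= M) /\
  (forall x x' : X, f x + f x' >= dist x x').

Definition in_tight_span (X : MetricSpace) (f : X -> R) : Prop :=
  in_Delta f /\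
  (forall g : X -> R, in_Delta g -> (forall x, g x <= f x) -> forall x, g x = f x).

Definition sup_dist_is (X : MetricSpace) (f g : X -> R) (r : R) : Prop :=
  is_lub (fun t => exists x, t = Rabs (f x - g x)) r.

(** E(X) >= Y : Y isometrically embeds into the tight span E(X)
    (with the sup-norm metric). *)
Definition embeds_in_tight_span (X Y : MetricSpace) : Prop :=
  exists phi : Y -> X -> R,
    (forall y, in_tight_span (phi y)) /\
    (forall y y', sup_dist_is (phi y) (phi y') (dist y y')).

Definition isometric (A B : MetricSpace) (e : A -> B) : Prop :=
  forall a a', dist (e a) (e a') = dist a a'.
Definition lipschitz1 (A B : MetricSpace) (f : A -> B) : Prop :=
  forall a a', dist (f a) (f a') <= dist a a'.

Definition injective_space (E : MetricSpace) : Prop :=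
  forall (X Xt : MetricSpace), is_metric X -> is_metric Xt ->
  forall e : X -> Xt, isometric e ->
  forall f : X -> E, lipschitz1 f ->
  exists ft : Xt -> E, lipschitz1 ft /\ forall x, ft (e x) = f x.

(* If p is X-surrounding, then d(p, .) restricted to X is a minimal element of
   Delta(X): for x in X pick the coordinate i realising d(p, x) and the cone
   p + xi Lambda_i on the side of p away from x; a point x' of X in that cone has
   d(x, x') >= d(p, x) + d(p, x'), which forces g(x) >= d(p, x) for every
   g <= d(p, .) in Delta(X). The same cone point gives
   sup_X |d(p, .) - d(q, .)| = d(p, q), so p |-> d(p, .) embeds F(X) into E(X).
   Every point of the ball is sphere-surrounding, while (3/5, 3/5, 3/5, 0, ...)
   is sphere-surrounding but outside the ball. A surrounding point outside X
   obstructs injectivity of X, since a 1-Lipschitz retraction onto X would map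
   it to a point y with d(y, .) <= d(p, .) on X, hence d(y, .) = d(p, .). *)

From HB Require Import structures.
From mathcomp Require Import all_boot.
From Stdlib Require Import Reals Lra Classical FunctionalExtensionality.

Set Implicit Arguments.
Unset Strict Implicit.
Unset Printing Implicit Defensive.

Local Open Scope R_scope.

HB.instance Definition _ := Monoid.isComLaw.Build R 0 Rplus
  (fun a b c => esym (Rplus_assoc a b c)) Rplus_comm Rplus_0_l.

Lemma Rbigmax_le {I : Type} (s : seq I) (P : pred I) (F : I -> R) (M : R) :
  0 <= M -> (forall i, P i -> F i <= M) -> \big[Rmax/0]_(i <- s | P i) F i <= M.
Proof. by move=> M0 FM; elim/big_ind: _ => // x y; apply: Rmax_lub. Qed.

Lemma le_Rbigmax {I : eqType} (s : seq I) (F : I -> R) (i : I) :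
  i \in s -> F i <= \big[Rmax/0]_(j <- s) F j.
Proof.
elim: s => // a s IHs; rewrite in_cons big_cons => /orP[/eqP-> | /IHs Fi].
  exact: Rmax_l.
exact: Rle_trans Fi (Rmax_r _ _).
Qed.

Lemma Rbigmax_ge0 {I : Type} (s : seq I) (F : I -> R) :
  (forall i, 0 <= F i) -> 0 <= \big[Rmax/0]_(i <- s) F i.
Proof.
move=> F0; elim/big_ind: _ => //; first exact: Rle_refl.
by move=> x y x0 _; apply: Rle_trans x0 (Rmax_l _ _).
Qed.

Lemma Rbigmax_attained (k : nat) (F : 'I_k.+1 -> R) :
  (forall i, 0 <= F i) -> exists i, \big[Rmax/0]_(i < k.+1) F i = F i.
Proof.
move=> F0.
have [[i ->]|big0] : (exists i, \big[Rmax/0]_(i < k.+1) F i = F i) \/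
                     \big[Rmax/0]_(i < k.+1) F i = 0.
- elim/big_ind: _ => [|x y|i _]; [by right | | by left; exists i].
  by apply: (Rmax_case x y (fun r => _ \/ r = 0)).
- by exists i.
- exists ord0; rewrite big0; apply: Rle_antisym; first exact: F0.
  by rewrite -[X in _ <= X]big0; apply: le_Rbigmax; rewrite mem_index_enum.
Qed.

Lemma coord_le_d_inf {m} (x y : vec m) (i : 'I_m) : Rabs (x i - y i) <= d_inf x y.
Proof. by apply: (le_Rbigmax (fun j => Rabs (x j - y j))); rewrite mem_index_enum. Qed.

Lemma coord_le_norm_inf {m} (x : vec m) (i : 'I_m) : Rabs (x i) <= norm_inf x.
Proof. by apply: (le_Rbigmax (fun j => Rabs (x j))); rewrite mem_index_enum. Qed.

Lemma norm_inf_ge0 {m} (x : vec m) : 0 <= norm_inf x.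
Proof. by apply: Rbigmax_ge0 => i; apply: Rabs_pos. Qed.

Lemma d_inf_ge0 {m} (x y : vec m) : 0 <= d_inf x y.
Proof. by apply: Rbigmax_ge0 => i; apply: Rabs_pos. Qed.

Lemma d_inf_sym {m} (x y : vec m) : d_inf x y = d_inf y x.
Proof. by apply: eq_bigr => i _; apply: Rabs_minus_sym. Qed.

Lemma d_inf_triangle {m} (x y z : vec m) : d_inf x z <= d_inf x y + d_inf y z.
Proof.
apply: Rbigmax_le => [|i _]; first by have := d_inf_ge0 x y; have := d_inf_ge0 y z; lra.
have := coord_le_d_inf x y i; have := coord_le_d_inf y z i.
have := Rabs_triang (x i - y i) (y i - z i).
have -> : x i - y i + (y i - z i) = x i - z i by ring.
lra.
Qed.

Lemma d_inf_le_through {m} (p x y : vec m) : d_inf x y <= d_inf p x + d_inf p y.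
Proof. by rewrite (d_inf_sym p x); apply: d_inf_triangle. Qed.

Lemma d_inf_le_norm_inf {m} (x y : vec m) : d_inf x y <= norm_inf x + norm_inf y.
Proof.
apply: Rbigmax_le => [|i _]; first by have := norm_inf_ge0 x; have := norm_inf_ge0 y; lra.
have := coord_le_norm_inf x i; have := coord_le_norm_inf y i.
have := Rabs_triang (x i) (- y i); rewrite Rabs_Ropp -/(Rminus _ _); lra.
Qed.

Lemma d_inf_xx {m} (x : vec m) : d_inf x x = 0.
Proof.
apply: Rle_antisym; last exact: d_inf_ge0.
by apply: Rbigmax_le => [|i _]; rewrite ?Rminus_diag ?Rabs_R0; apply: Rle_refl.
Qed.

Lemma d_inf_eq0 {m} (x y : vec m) : d_inf x y = 0 -> x = y.
Proof.
move=> d0; apply: functional_extensionality => i.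
have := coord_le_d_inf x y i; rewrite d0; split_Rabs; lra.
Qed.

Lemma d_inf_attained {k} (x y : vec k.+1) : exists i, d_inf x y = Rabs (x i - y i).
Proof. by apply: Rbigmax_attained => i; apply: Rabs_pos. Qed.

Lemma subspace_is_metric {m} (P : vec m -> Prop) : is_metric (subspace P).
Proof.
split; [|split; [|split]].
- by move=> x y; apply: d_inf_ge0.
- move=> x y; split=> [/d_inf_eq0 xy | ->]; last exact: d_inf_xx.
  by apply: eq_sig_hprop xy => z; apply: proof_irrelevance.
- by move=> x y; apply: d_inf_sym.
- by move=> x y z; apply: d_inf_triangle.
Qed.

Lemma sgnb_abs (b : bool) : Rabs (sgnb b) = 1.
Proof. by case: b; rewrite /= ?Rabs_Ropp Rabs_R1. Qed.

Lemma sgnb_mul_self (b : bool) : sgnb b * sgnb b = 1.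
Proof. by case: b => /=; ring. Qed.

Lemma d_inf_shift {m} (p z : vec m) (b : bool) :
  d_inf p (fun j => p j + sgnb b * z j) = norm_inf z.
Proof.
apply: eq_bigr => i _.
have -> : p i - (p i + sgnb b * z i) = - (sgnb b * z i) by ring.
by rewrite Rabs_Ropp Rabs_mult sgnb_abs Rmult_1_l.
Qed.

Lemma Lambda_of_dominant {m} (z : vec m) (i : 'I_m) :
  (forall j, Rabs (z j) <= z i) -> Lambda i z.
Proof.
move=> dom; apply: Rle_antisym.
  by have := coord_le_norm_inf z i; have := Rle_abs (z i); lra.
by apply: Rbigmax_le => [|j _]; [apply: Rle_trans (dom i); apply: Rabs_pos | apply: dom].
Qed.

Lemma surrounding_cone_of_point {m} (X : vec m -> Prop) (p x : vec m) i xi :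
  X x -> Lambda i (fun j => sgnb xi * (x j - p j)) ->
  exists z, Lambda i z /\ X (fun j => p j + sgnb xi * z j).
Proof.
move=> Xx Lx; exists (fun j => sgnb xi * (x j - p j)); split=> //.
have -> // : (fun j => p j + sgnb xi * (sgnb xi * (x j - p j))) = x.
by apply: functional_extensionality => j; rewrite -Rmult_assoc sgnb_mul_self; ring.
Qed.

(* i realises d_inf p x, and xi points from x towards p along i. *)
Lemma d_inf_far_cone {k} (p x : vec k.+1) : exists i xi, forall z, Lambda i z ->
  d_inf p x + norm_inf z <= d_inf x (fun j => p j + sgnb xi * z j).
Proof.
have [i pxi] := d_inf_attained p x.
suff [xi away] : exists xi, sgnb xi * (x i - p i) <= 0.
  exists i, xi => z zi; have := norm_inf_ge0 z; rewrite -zi pxi.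
  have := coord_le_d_inf x (fun j => p j + sgnb xi * z j) i.
  by case: xi away => /=; split_Rabs; lra.
by have [le | lt] := Rle_lt_dec (p i) (x i); [exists false | exists true]; rewrite /=; lra.
Qed.

Section Surrounding.

Variables (k : nat) (X : vec k.+1 -> Prop) (p : vec k.+1).
Hypothesis surr_p : surrounding X p.

Lemma surrounding_dist_minimal (g : subspace X -> R) :
  (forall x x', g x + g x' >= dist x x') ->
  (forall x, g x <= d_inf p (proj1_sig x)) ->
  forall x, g x = d_inf p (proj1_sig x).
Proof.
move=> g_Delta g_le x; apply: Rle_antisym => //.
have [i [xi far]] := d_inf_far_cone p (proj1_sig x).
have [z [zi Xx']] := surr_p i xi.
have := g_Delta x (exist _ _ Xx'); have := g_le (exist _ _ Xx').
rewrite /= d_inf_shift; have := far z zi; lra.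
Qed.

Lemma surrounding_sup_dist (q : vec k.+1) :
  @sup_dist_is (subspace X) (fun x => d_inf p (proj1_sig x))
    (fun x => d_inf q (proj1_sig x)) (d_inf p q).
Proof.
split=> [_ [x ->] | b ub].
  have := d_inf_triangle p q (proj1_sig x); have := d_inf_triangle q p (proj1_sig x).
  by rewrite (d_inf_sym q p); split_Rabs; lra.
have [i [xi far]] := d_inf_far_cone p q.
have [z [zi Xx']] := surr_p i xi.
have := ub _ (ex_intro _ (exist _ _ Xx') erefl); rewrite /= d_inf_shift.
have := far z zi; split_Rabs; lra.
Qed.

End Surrounding.

Definition bounded {m} (X : vec m -> Prop) : Prop := exists M, forall x, X x -> norm_inf x <= M.

Lemma surrounding_in_tight_span {k} (X : vec k.+1 -> Prop) (p : vec k.+1) :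
  bounded X -> surrounding X p ->
  @in_tight_span (subspace X) (fun x => d_inf p (proj1_sig x)).
Proof.
move=> [M XM] surr_p; split=> [|g [_ g_Delta] g_le]; last exact: surrounding_dist_minimal.
split=> [|x x']; last by apply/Rle_ge/d_inf_le_through.
exists (norm_inf p + M) => [[x Xx]] /=; rewrite Rabs_pos_eq; last exact: d_inf_ge0.
by have := d_inf_le_norm_inf p x; have := XM x Xx; lra.
Qed.

Lemma tight_span_embeds_surrounding {k} (X : vec k.+1 -> Prop) :
  bounded X -> embeds_in_tight_span (subspace X) (F_space X).
Proof.
move=> bX; exists (fun y x => d_inf (proj1_sig y) (proj1_sig x)).
split=> [[y surr_y] | [y surr_y] y']; first exact: surrounding_in_tight_span.
exact: surrounding_sup_dist.
Qed.

Lemma surrounding_not_injective {k} (X : vec k.+1 -> Prop) (p : vec k.+1) :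
  surrounding X p -> ~ X p -> ~ injective_space (subspace X).
Proof.
move=> surr_p notXp inj.
pose Y x := X x \/ x = p.
pose incl (x : subspace X) : subspace Y := exist Y (proj1_sig x) (or_introl (proj2_sig x)).
have [r [r_lip r_incl]] := inj _ _ (subspace_is_metric X) (subspace_is_metric Y)
  incl (fun _ _ => erefl) (fun x => x) (fun _ _ => Rle_refl _).
pose y := r (exist Y p (or_intror erefl)).
have y_le (x : subspace X) : d_inf (proj1_sig y) (proj1_sig x) <= d_inf p (proj1_sig x).
  by have := r_lip (exist Y p (or_intror erefl)) (incl x); rewrite r_incl.
have y_Delta (x x' : subspace X) :
    d_inf (proj1_sig y) (proj1_sig x) + d_inf (proj1_sig y) (proj1_sig x') >= dist x x'.
  by apply/Rle_ge/d_inf_le_through.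
have := surrounding_dist_minimal surr_p y_Delta y_le y.
rewrite d_inf_xx => /esym /d_inf_eq0 py.
by apply: notXp; rewrite py; apply: proj2_sig.
Qed.

Lemma sqr_coord_le_sqnorm2 {m} (x : vec m) (i : 'I_m) : x i * x i <= sqnorm2 x.
Proof.
rewrite /sqnorm2 (bigD1 i) //= -[X in X <= _]Rplus_0_r; apply: Rplus_le_compat_l.
by elim/big_ind: _ => [|u v|j _]; [apply: Rle_refl | lra | nra].
Qed.

Lemma sphere_sub_cball {m} : subset_of (@sphere m) (@cball m).
Proof. by move=> x; rewrite /sphere /cball => ->; apply: Rle_refl. Qed.

Lemma cball_bounded {m} : bounded (@cball m).
Proof.
exists 1 => x Bx; apply: Rbigmax_le => [|j _]; first lra.
have := sqr_coord_le_sqnorm2 x j; rewrite /cball in Bx => sq.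
by apply: Rabs_le; nra.
Qed.

Lemma sphere_bounded {m} : bounded (@sphere m).
Proof. by have [M BM] := @cball_bounded m; exists M => x /sphere_sub_cball /BM. Qed.

Lemma surrounding_mono {m} (X Y : vec m -> Prop) :
  subset_of X Y -> subset_of (surrounding X) (surrounding Y).
Proof.
move=> XY p surr_p i xi; have [z [zi Xz]] := surr_p i xi.
by exists z; split=> //; apply: XY.
Qed.

(* Move from p along the i-th axis, in the direction xi, until the sphere is hit. *)
Lemma cball_sub_surrounding_sphere {m} : subset_of (@cball m) (surrounding (@sphere m)).
Proof.
move=> p Bp i xi.
pose S := \big[Rplus/0]_(j < m | j != i) (p j * p j).
have p_split : sqnorm2 p = p i * p i + S by rewrite /sqnorm2 (bigD1 i).
rewrite /cball p_split in Bp.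
pose s := sqrt (1 - S).
have ss : s * s = 1 - S by apply: sqrt_sqrt; nra.
have pi_le_s : Rabs (p i) <= s.
  by rewrite -sqrt_Rsqr_abs; apply: sqrt_le_1_alt; rewrite /Rsqr; lra.
apply: (surrounding_cone_of_point (x := fun j => if j == i then sgnb xi * s else p j)).
  rewrite /sphere /sqnorm2 (bigD1 i) //= eqxx.
  rewrite (eq_bigr (fun j => p j * p j)) => [|j /negbTE -> //].
  have -> : sgnb xi * s * (sgnb xi * s) = sgnb xi * sgnb xi * (s * s) by ring.
  by rewrite sgnb_mul_self ss -/S; ring.
have s_ge : 0 <= sgnb xi * (sgnb xi * s - p i).
  by rewrite Rmult_minus_distr_l -Rmult_assoc sgnb_mul_self; case: xi => /=; split_Rabs; lra.
apply: Lambda_of_dominant => j; rewrite eqxx; case: eqP => [-> | _].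
  by rewrite Rabs_pos_eq //; apply: Rle_refl.
by rewrite Rminus_diag Rmult_0_r Rabs_R0.
Qed.

Lemma sum_first_three (n : nat) (hn : (2 <= n)%nat) (F : nat -> R) :
  (forall k, (3 <= k)%nat -> F k = 0) ->
  \big[Rplus/0]_(j < n.+1) F j = F 0%nat + F 1%nat + F 2%nat.
Proof.
case: n hn => [|[|n]] // _ F0.
by rewrite !big_ord_recl big1 => [|j _]; rewrite ?lift0 /=; [ring | apply: F0].
Qed.

Definition block3 {m} (a b c : R) (i : 'I_m) : vec m := fun j =>
  if j == i then (if (i < 3)%nat then a else c) else if (j < 3)%nat then b else 0.

Lemma block3_diag {m} a b c (i : 'I_m) :
  block3 a b c i i = if (i < 3)%nat then a else c.
Proof. by rewrite /block3 eqxx. Qed.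

Lemma block3_sub {m} a b c a' b' c' (i j : 'I_m) :
  block3 a b c i j - block3 a' b' c' i j = block3 (a - a') (b - b') (c - c') i j.
Proof. by rewrite /block3; case: (j == i); case: (i < 3)%nat; case: (j < 3)%nat; ring. Qed.

Lemma block3_abs_le {m} a b c (i j : 'I_m) M :
  Rabs a <= M -> Rabs b <= M -> Rabs c <= M -> Rabs (block3 a b c i j) <= M.
Proof.
move=> aM bM cM; rewrite /block3.
case: (j == i); case: (i < 3)%nat; case: (j < 3)%nat => //.
all: by rewrite Rabs_R0; have := Rabs_pos a; lra.
Qed.

Lemma sqnorm2_block3 (n : nat) (hn : (2 <= n)%nat) a b c (i : 'I_n.+1) :
  sqnorm2 (block3 a b c i) =
  if (i < 3)%nat then a * a + 2 * (b * b) else 3 * (b * b) + c * c.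
Proof.
pose B (k : nat) := if (k < 3)%nat then b else 0.
have sumB : \big[Rplus/0]_(j < n.+1) (B j * B j) = 3 * (b * b).
  rewrite (sum_first_three hn (F := fun k => B k * B k)) /B /=; first ring.
  by move=> k /leq_gtF ->; ring.
rewrite (bigD1 i) //= in sumB.
rewrite /sqnorm2 (bigD1 i) //= (eq_bigr (fun j : 'I_n.+1 => B j * B j)) => [|j /negbTE ji].
  by rewrite block3_diag; move: sumB; rewrite /B; case: (i < 3)%nat; nra.
by rewrite /block3 ji.
Qed.

Definition outer_point {m} : vec m := fun j => if (j < 3)%nat then 3/5 else 0.

Lemma outer_point_block3 {m} (i j : 'I_m) : outer_point j = block3 (3/5) (3/5) 0 i j.
Proof. by rewrite /outer_point /block3; case: eqP => [-> |]; case: (i < 3)%nat. Qed.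

Lemma outer_point_not_in_cball (n : nat) (hn : (2 <= n)%nat) :
  ~ cball (@outer_point n.+1).
Proof.
have -> : @outer_point n.+1 = block3 (3/5) (3/5) 0 ord0.
  by apply: functional_extensionality => j; apply: outer_point_block3.
by rewrite /cball sqnorm2_block3 //=; lra.
Qed.

Lemma outer_point_cone (n : nat) (hn : (2 <= n)%nat) (i : 'I_n.+1) (xi : bool) a b c :
  (if (i < 3)%nat then a * a + 2 * (b * b) else 3 * (b * b) + c * c) = 1 ->
  let M := sgnb xi * (if (i < 3)%nat then a - 3/5 else c) in
  Rabs (a - 3/5) <= M -> Rabs (b - 3/5) <= M -> Rabs c <= M ->
  exists z, Lambda i z /\ sphere (fun j => outer_point j + sgnb xi * z j).
Proof.
move=> norm1 M aM bM cM.
apply: (surrounding_cone_of_point (x := block3 a b c i)).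
  by rewrite /sphere sqnorm2_block3.
apply: Lambda_of_dominant => j.
rewrite !(outer_point_block3 i) !block3_sub Rminus_0_r Rabs_mult sgnb_abs Rmult_1_l block3_diag.
exact: block3_abs_le.
Qed.

(* Sphere points witnessing each cone: for i < 3 take a at i and b at the two other
   of the first three coordinates, for i >= 3 take 1/2 on the first three and
   +-1/2 at i. *)
Lemma outer_point_surrounding (n : nat) (hn : (2 <= n)%nat) :
  surrounding (@sphere n.+1) outer_point.
Proof.
move=> i xi; case: (ltnP i 3) => i3.
  case: xi; [apply: (outer_point_cone hn (a := 7/9) (b := 4/9) (c := 0))
            | apply: (outer_point_cone hn (a := 1/3) (b := 2/3) (c := 0))];
  by rewrite i3 /=; try split_Rabs; lra.
apply: (outer_point_cone hn (a := 1/2) (b := 1/2) (c := sgnb xi / 2));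
by rewrite ltnNge i3 /=; case: xi => /=; try split_Rabs; lra.
Qed.

Local Close Scope R_scope.

Theorem theorem5p9 (n : nat) (hn : (2 <= n)%N) :
  (* (i) *)
  (embeds_in_tight_span (S_inf n) (F_space (@sphere n.+1)) /\
   strict_subset_of (@cball n.+1) (surrounding (@sphere n.+1))) /\
  (* (ii) *)
  (embeds_in_tight_span (D_inf n) (F_space (@cball n.+1)) /\
   subset_of (surrounding (@sphere n.+1)) (surrounding (@cball n.+1)) /\
   strict_subset_of (@cball n.+1) (surrounding (@sphere n.+1))) /\
  (* consequence *)
  ~ injective_space (D_inf n).
Proof.
have surr_mono := surrounding_mono (@sphere_sub_cball n.+1).
have strict : strict_subset_of (@cball n.+1) (surrounding (@sphere n.+1)).
  split; first exact: cball_sub_surrounding_sphere.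
  by exists outer_point; split; [exact: outer_point_surrounding | exact: outer_point_not_in_cball].
split; first by split=> //; apply: tight_span_embeds_surrounding sphere_bounded.
split; first by split=> //; apply: tight_span_embeds_surrounding cball_bounded.
apply: (surrounding_not_injective (p := outer_point)); last exact: outer_point_not_in_cball.
exact/surr_mono/outer_point_surrounding.
Qed.
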